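(* Let $(X,\sigma,\tau)$ be a full, separable, chronologically dense Lorentzian metric space satisfying the S-property which is globally hyperbolic with respect to a compatible causal relation $\leq$, and let $(\overline{X},\sigma_{chr},\overline{\tau})$ be its c-completion. Assume that no two distinct points of $\partial X$ are related by $\leq_{\overline{\tau}}$. Then for any $(P,F)\in\overline{X}$ and any $\sigma_{chr}$-neighbourhood $U$ of $(P,F)$ there is a $\sigma_{chr}$-neighbourhood $V$ of $(P,F)$ such that whenever $a,b,c\in\overline{X}$ satisfy $a\,\overline{\ll}\,b\,\overline{\ll}\,c$ and $a,c\in V$, then $b\in U$.
   Context: A Lorentzian metric space $(X,\sigma,\tau)$ is a topological space with $\tau:X\times X\to[0,\infty]$ lower semicontinuous and satisfying $\tau(x,z)\geq\tau(x,y)+\tau(y,z)$ whenever $\tau(x,y),\tau(y,z)>0$. Write $x\ll y$ iff $\tau(x,y)>0$, $I^\pm(x)$ for chronological future/past, $I^\pm[A]=\bigcup_{a\in A}I^\pm(a)$. Full: $I^+(x)\neq\emptyset\neq I^-(x)$ for all $x$. Future (resp. past) chain: $x_n\ll x_{n+1}$ (resp. $x_{n+1}\ll x_n$) for all $n$. Separable: there is a countable $S$ with $x\ll y\Rightarrow\exists s\in S$, $x\ll s\ll y$. Chronologically dense: every $x$ with $I^-(x)\neq\emptyset$ (resp. $I^+(x)\neq\emptyset$) is the $\sigma$-limit of a future (resp. past) chain. A compatible causal relation is a pre-order $\leq$ containing $\ll$ with $\tau(x,z)\geq\tau(x,y)+\tau(y,z)$ for $x\leq y\leq z$; with $J(x,y)=\{z:x\leq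 z\leq y\}$, $X$ is globally hyperbolic if $\leq$ is antisymmetric and every $J(x,y)$ is $\sigma$-compact. Past set: $P=I^-[P]$; $\downarrow S=I^-[\{p:p\ll q\ \forall q\in S\}]$; IP: past set not the union of two proper past subsets; PIP: IP of the form $I^-(p)$; future sets, $\uparrow S$, IF, PIF dually. For nonempty IP $P$ and IF $F$, $P\sim_S F$ iff $P$ is a maximal IP in $\downarrow F$ and $F$ a maximal IF in $\uparrow P$; $P\sim_S\emptyset$ (resp. $\emptyset\sim_S F$) if the nonempty $P$ (resp. $F$) is S-related to no nonempty IF (resp. IP). S-property: for all $x$, $I^-(x)\sim_S I^+(x)$, and no PIF other than $I^+(x)$ (resp. no PIP other than $I^-(x)$) is S-related to $I^-(x)$ (resp. $I^+(x)$). c-completion $\overline X=\{(P,F):P\sim_S F\}$, $\mathbf{i}(x)=(I^-(x),I^+(x))$, $\partial X=\overline X\setminus\mathbf{i}(X)$. $\sigma_{chr}$: closed sets are those $C$ with $L(s)\subset C$ for every sequence $s$ in $C$, where $(P,F)\in L(\{(P_n,F_n)\})$ iff ($P\neq\emptyset\Rightarrow P\subset LI(P_n)$ and $P$ is a maximal IP in $LS(P_n)$) and ($F\neq\emptyset\Rightarrow F\subset LI(F_n)$ and $F$ is a maximal IF in $LS(F_n)$), $LI,LS$ the set-theoretic lower/upper limits. $\overline\tau((P,F),(P',F'))=0$ if $F=\emptyset$ or $P'=\emptyset$, otherwise $\lim_n\tau(q_n,p'_n)$ for a past chain $\{q_n\}$ with $I^+[\{q_n\}]=F$ and a future chain $\{p'_n\}$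 with $I^-[\{p'_n\}]=P'$. $a\,\overline\ll\, b$ iff $\overline\tau(a,b)>0$; $\overline I^\pm(a)$ denote the corresponding futures/pasts in $\overline X$; $a\leq_{\overline\tau}b$ iff $\overline I^-(a)\subset\overline I^-(b)$ and $\overline I^+(b)\subset\overline I^+(a)$. *)

From HB Require Import structures.
From mathcomp Require Import all_boot all_order all_algebra.
From mathcomp Require Import all_classical all_reals all_analysis.
Set Implicit Arguments. Unset Strict Implicit. Unset Printing Implicit Defensive.
Import Order.TTheory GRing.Theory Num.Theory.
Local Open Scope classical_set_scope.
Local Open Scope ring_scope.

Section LMS.
Context {R : realType} {X : topologicalType} (tau : X * X -> \bar R).
Local Open Scope ereal_scope.

Definition ll (x y : X) : Prop := 0 < tau (x, y).
Definition Ifut (x : X) : set X := [set y | ll x y].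
Definition Ipast (x : X) : set X := [set y | ll y x].
Definition Ifut_set (A : set X) : set X := [set y | exists2 a, A a & ll a y].
Definition Ipast_set (A : set X) : set X := [set y | exists2 a, A a & ll y a].

Definition lorentzian_metric : Prop :=
  (forall x y, 0 <= tau (x, y)) /\
  lower_semicontinuous tau /\
  (forall x y z, ll x y -> ll y z -> tau (x, y) + tau (y, z) <= tau (x, z)).

Definition full : Prop := forall x, Ifut x !=set0 /\ Ipast x !=set0.

Definition future_chain (s : nat -> X) : Prop := forall n, ll (s n) (s n.+1).
Definition past_chain (s : nat -> X) : Prop := forall n, ll (s n.+1) (s n).

Definition separable : Prop :=
  exists S : set X, countable S /\
    forall x y, ll x y -> exists2 s, S s & ll x s /\ ll s y.

Definition chronologically_dense : Prop :=
  (forall x, Ipast x !=set0 -> exists s, future_chain s /\ s @ \oo --> x) /\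
  (forall x, Ifut x !=set0 -> exists s, past_chain s /\ s @ \oo --> x).

Definition compatible_causal (le : X -> X -> Prop) : Prop :=
  (forall x, le x x) /\ (forall x y z, le x y -> le y z -> le x z) /\
  (forall x y, ll x y -> le x y) /\
  (forall x y z, le x y -> le y z -> tau (x, y) + tau (y, z) <= tau (x, z)).

Definition causal_diamond (le : X -> X -> Prop) (x y : X) : set X :=
  [set z | le x z /\ le z y].

Definition globally_hyperbolic (le : X -> X -> Prop) : Prop :=
  (forall x y, le x y -> le y x -> x = y) /\
  (forall x y, compact (causal_diamond le x y)).

Definition past_set (P : set X) : Prop := P = Ipast_set P.
Definition future_set (F : set X) : Prop := F = Ifut_set F.

Definition IP (P : set X) : Prop :=
  past_set P /\
  ~ (exists P1 P2, past_set P1 /\ past_set P2 /\ P1 `<` P /\ P2 `<` P /\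
       P = P1 `|` P2).
Definition IF (F : set X) : Prop :=
  future_set F /\
  ~ (exists F1 F2, future_set F1 /\ future_set F2 /\ F1 `<` F /\ F2 `<` F /\
       F = F1 `|` F2).

Definition down (S : set X) : set X :=
  Ipast_set [set p | forall q, S q -> ll p q].
Definition up (S : set X) : set X :=
  Ifut_set [set p | forall q, S q -> ll q p].

Definition maximal_IP_in (P A : set X) : Prop :=
  IP P /\ P `<=` A /\ forall P', IP P' -> P `<=` P' -> P' `<=` A -> P' = P.
Definition maximal_IF_in (F A : set X) : Prop :=
  IF F /\ F `<=` A /\ forall F', IF F' -> F `<=` F' -> F' `<=` A -> F' = F.

Definition Srel_ne (P F : set X) : Prop :=
  IP P /\ P !=set0 /\ IF F /\ F !=set0 /\
  maximal_IP_in P (down F) /\ maximal_IF_in F (up P).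

Definition Srel (P F : set X) : Prop :=
  Srel_ne P F \/
  (IP P /\ P !=set0 /\ F = set0 /\ ~ (exists F', Srel_ne P F')) \/
  (P = set0 /\ IF F /\ F !=set0 /\ ~ (exists P', Srel_ne P' F)).

Definition S_property : Prop :=
  forall x,
    Srel (Ipast x) (Ifut x) /\
    (forall p, IF (Ifut p) -> Srel (Ipast x) (Ifut p) -> Ifut p = Ifut x) /\
    (forall p, IP (Ipast p) -> Srel (Ipast p) (Ifut x) -> Ipast p = Ipast x).

Definition cc : set (set X * set X) := [set a | Srel a.1 a.2].
Definition cc_inj (x : X) : set X * set X := (Ipast x, Ifut x).
Definition cc_boundary : set (set X * set X) := cc `\` range cc_inj.

Definition LI (A : nat -> set X) : set X :=
  [set x | exists N, forall n, (N <= n)%N -> A n x].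
Definition LS (A : nat -> set X) : set X :=
  [set x | forall N, exists2 n, (N <= n)%N & A n x].

Definition Lchr (s : nat -> set X * set X) : set (set X * set X) :=
  [set a | cc a /\
    (a.1 !=set0 -> a.1 `<=` LI (fun n => (s n).1) /\
                    maximal_IP_in a.1 (LS (fun n => (s n).1))) /\
    (a.2 !=set0 -> a.2 `<=` LI (fun n => (s n).2) /\
                    maximal_IF_in a.2 (LS (fun n => (s n).2)))].

Definition chr_closed (C : set (set X * set X)) : Prop :=
  C `<=` cc /\ forall s, (forall n, C (s n)) -> Lchr s `<=` C.
Definition chr_open (O : set (set X * set X)) : Prop :=
  O `<=` cc /\ chr_closed (cc `\` O).
Definition chr_nbhd (U : set (set X * set X)) (a : set X * set X) : Prop :=
  exists O, chr_open O /\ O a /\ O `<=` U.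

Definition chains_for (F P' : set X) (qp : (nat -> X) * (nat -> X)) : Prop :=
  past_chain qp.1 /\ Ifut_set (range qp.1) = F /\
  future_chain qp.2 /\ Ipast_set (range qp.2) = P'.

Definition taubar (a b : set X * set X) : \bar R :=
  if pselect (a.2 = set0 \/ b.1 = set0) is left _ then 0 else
  match pselect (exists qp, chains_for a.2 b.1 qp) with
  | left e => let qp := proj1_sig (cid e) in
              limn (fun n => tau (qp.1 n, qp.2 n))
  | right _ => 0
  end.

Definition llbar (a b : set X * set X) : Prop := 0 < taubar a b.
Definition Ifutbar (a : set X * set X) := [set b | cc b /\ llbar a b].
Definition Ipastbar (a : set X * set X) := [set b | cc b /\ llbar b a].
Definition le_taubar (a b : set X * set X) : Prop :=
  Ipastbar a `<=` Ipastbar b /\ Ifutbar b `<=` Ifutbar a.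

End LMS.

From Pilot Require Import Defs.
From HB Require Import structures.
From mathcomp Require Import all_boot all_order all_algebra.
From mathcomp Require Import all_classical all_reals all_analysis.
Set Implicit Arguments. Unset Strict Implicit. Unset Printing Implicit Defensive.
Import Order.TTheory GRing.Theory Num.Theory.
Local Open Scope classical_set_scope.

(* The chronological diamonds D(p, q) = {(P, F) in the c-completion | p in P,
   q in F} (either constraint may be dropped) are open for the chronological
   topology and causally convex: if a << b << c, p in P_a and q in F_c, then p << r
   for some r in F_a /\ P_b, so p in P_b, and dually q in F_b.  It remains to see
   that they form a neighbourhood basis at every (P, F).  Generate P by a future
   chain (p_n) and F by a past chain (q_n); any sequence b_n in D(p_n, q_n) then
   converges chronologically to (P, F).  The delicate point is the maximality of
   P in the upper limit of the pasts of the b_n.  When F is nonempty it comes from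
   the S-relation of (P, F).  When F is empty, an IP P' containing P has no
   S-partner: a partner would bound the chain (p_n) from above, and a cluster
   point y of (p_n) in a compact causal diamond would give P = I^-(y), which has
   the partner I^+(y).  So (P', ∅) is a boundary point causally above (P, ∅), and
   the hypothesis on the boundary gives P' = P.  Time reversal handles F. *)

Section Chronology.
Context {R : realType} {X : topologicalType} (tau : X * X -> \bar R).
Local Notation ll := (ll tau).
Hypothesis ll_trans : forall x y z, ll x y -> ll y z -> ll x z.

Lemma past_set_ll (P : set X) x y : past_set tau P -> P y -> ll x y -> P x.
Proof. by move=> PP Py xy; rewrite PP; exists y. Qed.

Lemma past_set_up (P : set X) x : past_set tau P -> P x -> exists2 y, P y & ll x y.
Proof. by move=> PP; rewrite {1}PP => -[y]; exists y. Qed.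

Lemma LS_sub_down (A B : nat -> set X) (P F : set X) :
  (forall n x y, A n x -> B n y -> ll x y) -> past_set tau P ->
  P `<=` LS A -> F `<=` LI B -> P `<=` Defs.down tau F.
Proof.
move=> AB PP PLS FLI x Px; have [y Py xy] := past_set_up PP Px.
exists y => // f Ff; have [N Bf] := FLI _ Ff; have [n Nn Ay] := PLS _ Py N.
exact: AB Ay (Bf _ Nn).
Qed.

Lemma future_chain_ll (p : nat -> X) k n x :
  future_chain tau p -> (k <= n)%N -> ll x (p k) -> ll x (p n).
Proof.
move=> pc; elim: n => [|n IH]; first by rewrite leqn0 => /eqP <-.
rewrite leq_eqVlt ltnS => /orP [/eqP <-//|/IH xpn xk].
exact: ll_trans (xpn xk) (pc n).
Qed.

Lemma future_chain_Ipast (p : nat -> X) n :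
  future_chain tau p -> Ipast_set tau (range p) (p n).
Proof. by move=> pc; exists (p n.+1); [exists n.+1|exact: pc]. Qed.

Hypothesis Hsep : separable tau.

Lemma separable_seq (x0 : X) :
  exists e : nat -> X, forall x y, ll x y -> exists n, ll x (e n) /\ ll (e n) y.
Proof.
case: Hsep => S [/countable_injP [f finj] HS].
have /choice [e He] : forall n : nat,
    exists s, (exists2 t, S t & f t = n) -> S s /\ f s = n.
  by move=> n; have [[s Ss fs]|] := pselect (exists2 s, S s & f s = n);
    [exists s | exists x0].
exists e => x y /HS [s Ss xsy]; exists (f s).
have [Se fe] := He (f s) (ex_intro2 _ _ s Ss erefl).
by rewrite (finj (e (f s)) s) ?in_setE.
Qed.

Lemma Ipast_set_past (A : set X) : past_set tau (Ipast_set tau A).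
Proof.
apply/seteqP; split => y /=.
- move=> [a Aa ya]; have [S [_ HS]] := Hsep; have [s _ [ys sa]] := HS _ _ ya.
  by exists s => //; exists a.
- by move=> [z [a Aa za] yz]; exists a => //; apply: ll_trans yz za.
Qed.

Lemma IP_directed (P : set X) x y : IP tau P -> P x -> P y ->
  exists z, [/\ P z, ll x z & ll y z].
Proof.
move=> [PP irrP] Px Py; apply: contrapT => nodir; apply: irrP.
exists (Ipast_set tau (P `&` Ifut tau x)), (Ipast_set tau (P `&` ~` Ifut tau x)).
have sub A : Ipast_set tau (P `&` A) `<=` P.
  by move=> z [w [Pw _] zw]; apply: past_set_ll zw.
split; first exact: Ipast_set_past.
split; first exact: Ipast_set_past.
split.
  split=> // /(_ y Py) [w [Pw xw] yw].
  by apply: nodir; exists w.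
split.
  by split=> // /(_ x Px) [w [Pw nxw] xw].
apply/seteqP; split => [z Pz|z [] /sub //].
have [w Pw zw] := past_set_up PP Pz.
by have [xw|nxw] := pselect (ll x w); [left|right]; exists w.
Qed.

(* The chain is built by following an enumeration [e] of a countable dense set:
   at step [n] it climbs above both its last point and [e n], when [e n] is in [P]. *)
Lemma IP_future_chain (P : set X) : IP tau P -> P !=set0 ->
  exists2 p, future_chain tau p & Ipast_set tau (range p) = P.
Proof.
move=> IPP [x0 Px0]; have PP := IPP.1.
have [e He] := separable_seq x0.
have /choice [next Hnext] : forall nz : nat * X, exists w,
    P nz.2 -> [/\ P w, ll nz.2 w & P (e nz.1) -> ll (e nz.1) w].
  move=> [n z]; have [Pz|] := pselect (P z); last by exists z.
  have [Pen|nPen] := pselect (P (e n)).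
    by have [w [Pw zw enw]] := IP_directed IPP Pz Pen; exists w.
  by have [w Pw zw] := past_set_up PP Pz; exists w.
pose p := fix p n := if n is m.+1 then next (m, p m) else x0.
have Pp n : P (p n) by elim: n => //= n IH; have [] := Hnext (n, p n) IH.
exists p => [n|]; first by have [] := Hnext (n, p n) (Pp n).
apply/seteqP; split => [x [_ [n _ <-] xpn]|x Px].
  exact: past_set_ll PP (Pp n) xpn.
have [w Pw xw] := past_set_up PP Px.
have [n [xen enw]] := He _ _ xw.
exists (p n.+1); first by exists n.+1.
have [_ _ /(_ (past_set_ll PP Pw enw))] := Hnext (n, p n) (Pp n).
exact: ll_trans xen.
Qed.

Lemma IP_approx_seq (P : set X) : (P !=set0 -> IP tau P) ->
  exists op : nat -> option X, (forall n p, op n = Some p -> P p) /\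
    P `<=` LI (fun n => [set x | exists2 p, op n = Some p & ll x p]).
Proof.
move=> IPP; have [Pn|P0] := pselect (P !=set0); last first.
  by exists (fun=> None); split=> // x Px; case: P0; exists x.
have [p pc Pgen] := IP_future_chain (IPP Pn) Pn.
exists (fun n => Some (p n)); split=> [n _ [<-]|x].
  by rewrite -Pgen; exact: future_chain_Ipast.
rewrite -{1}Pgen => -[_ [k _ <-] xpk]; exists k => n kn.
by exists (p n) => //; exact: future_chain_ll pc kn xpk.
Qed.
End Chronology.

(* Reversing the time orientation exchanges pasts and futures: for [dual_tau tau]
   the notions [ll], [Ipast_set], [past_set], [IP], [future_chain], [down],
   [maximal_IP_in] unfold to [ll], [Ifut_set], [future_set], [IF], [past_chain],
   [up], [maximal_IF_in] of [tau] with the arguments of [ll] swapped. *)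
Definition dual_tau {R : realType} {X : topologicalType}
  (tau : X * X -> \bar R) : X * X -> \bar R := fun xy => tau (xy.2, xy.1).

Section TimeReversal.
Context {R : realType} {X : topologicalType} (tau : X * X -> \bar R).
Local Notation ll := (ll tau).
Hypothesis ll_trans : forall x y z, ll x y -> ll y z -> ll x z.

Lemma dual_ll_trans x y z :
  Defs.ll (dual_tau tau) x y -> Defs.ll (dual_tau tau) y z -> Defs.ll (dual_tau tau) x z.
Proof. by move=> xy yz; apply: ll_trans yz xy. Qed.

Lemma separable_dual : separable tau -> separable (dual_tau tau).
Proof.
by case=> S [cS HS]; exists S; split=> // x y /HS [s Ss [ys sx]]; exists s.
Qed.

Lemma Srel_ne_dual (P F : set X) : Srel_ne (dual_tau tau) F P <-> Srel_ne tau P F.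
Proof. by split=> -[? [? [? [? [? ?]]]]]. Qed.

Lemma future_set_ll (F : set X) x y : future_set tau F -> F y -> ll y x -> F x.
Proof. exact: (@past_set_ll _ _ (dual_tau tau)). Qed.

Lemma past_chain_ll (q : nat -> X) k n x :
  past_chain tau q -> (k <= n)%N -> ll (q k) x -> ll (q n) x.
Proof. exact: (@future_chain_ll _ _ (dual_tau tau) dual_ll_trans). Qed.

Lemma LS_sub_up (A B : nat -> set X) (P F : set X) :
  (forall n x y, A n x -> B n y -> ll x y) -> future_set tau F ->
  F `<=` LS B -> P `<=` LI A -> F `<=` Defs.up tau P.
Proof.
by move=> AB; apply: (@LS_sub_down _ _ (dual_tau tau)) => n x y Bx Ay; exact: AB Ay Bx.
Qed.

Hypothesis Hsep : separable tau.

Lemma IF_past_chain (F : set X) : IF tau F -> F !=set0 ->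
  exists2 q, past_chain tau q & Ifut_set tau (range q) = F.
Proof. exact: (IP_future_chain dual_ll_trans (separable_dual Hsep)). Qed.

Lemma IF_approx_seq (F : set X) : (F !=set0 -> IF tau F) ->
  exists oq : nat -> option X, (forall n q, oq n = Some q -> F q) /\
    F `<=` LI (fun n => [set x | exists2 q, oq n = Some q & ll q x]).
Proof. exact: (IP_approx_seq dual_ll_trans (separable_dual Hsep)). Qed.

End TimeReversal.

Section Openness.
Context {R : realType} {X : topologicalType} (tau : X * X -> \bar R).
Hypothesis Hlm : lorentzian_metric tau.

Let tau_pos_open : open [set xy | (0%:E < tau xy)%E].
Proof. by case: Hlm => _ [/lower_semicontinuousP]. Qed.

Lemma lorentzian_Ifut_open z : open (Ifut tau z).
Proof.
have pair_cont : continuous (fun y : X => (z, y)).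
  by move=> y; apply: cvg_pair; [exact: cvg_cst|exact: cvg_id].
exact: (continuousP _).1 pair_cont _ tau_pos_open.
Qed.

Lemma lorentzian_Ipast_open z : open (Ipast tau z).
Proof.
have pair_cont : continuous (fun y : X => (y, z)).
  by move=> y; apply: cvg_pair; [exact: cvg_id|exact: cvg_cst].
exact: (continuousP _).1 pair_cont _ tau_pos_open.
Qed.

End Openness.

Section BoundedChains.
Context {R : realType} {X : topologicalType} (tau : X * X -> \bar R).
Context (le : X -> X -> Prop).
Local Notation ll := (ll tau).
Hypothesis ll_trans : forall x y z, ll x y -> ll y z -> ll x z.
Hypothesis Hsep : separable tau.
Hypothesis Ifut_open : forall z, open (Ifut tau z).
Hypothesis Ipast_open : forall z, open (Ipast tau z).
Hypothesis ll_le : forall x y, ll x y -> le x y.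
Hypothesis diamond_compact : forall x y, compact (causal_diamond le x y).
Hypothesis Srel_ne_pt : forall y, Srel_ne tau (Ipast tau y) (Ifut tau y).

Lemma future_chain_cluster (p : nat -> X) y :
  future_chain tau p -> cluster (p @ \oo) y ->
  Ipast tau y `<=` Ipast_set tau (range p) /\
  Ipast_set tau (range p) `<=` Defs.down tau (Ifut tau y).
Proof.
move=> pc cly; split=> [z zy|x [_ [m _ <-] xpm]].
  have p_range : (p @ \oo) (range p) by exists 0%N => // n _; exists n.
  have [_ [[n _ <-] zpn]] := cly _ _ p_range (open_nbhs_nbhs (conj (Ifut_open z) zy)).
  by exists (p n) => //; exists n.
exists (p m) => // w yw.
have p_tail : (p @ \oo) (p @` [set n | (m < n)%N]) by exists m.+1 => // n mn; exists n.
have [_ [[n /= mn <-] pnw]] := cly _ _ p_tail (open_nbhs_nbhs (conj (Ipast_open w) yw)).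
exact: ll_trans (future_chain_ll ll_trans pc mn (pc m)) pnw.
Qed.

(* A chain bounded above lies in a compact causal diamond, so it has a cluster
   point [y]; the S-relation at [y] then identifies the generated IP with [I^-(y)]. *)
Lemma bounded_IP_partner (P : set X) p q :
  IP tau P -> future_chain tau p -> Ipast_set tau (range p) = P ->
  (forall n, ll (p n) q) -> exists F, Srel_ne tau P F.
Proof.
move=> IPP pc Pgen pq.
have [y [_ cly]] : causal_diamond le (p 0%N) q `&` cluster (p @ \oo) !=set0.
  apply: diamond_compact; exists 1%N => // n /= n_gt0.
  split; apply: ll_le; last exact: pq.
  exact (future_chain_ll ll_trans pc n_gt0 (pc 0%N)).
have [] := future_chain_cluster pc cly; rewrite Pgen => Py_sub Pdown.
have [_ [_ [_ [_ [[_ [_ maxP]] _]]]]] := Srel_ne_pt y.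
by exists (Ifut tau y); rewrite (maxP P IPP Py_sub Pdown).
Qed.

Lemma IP_partner_sub (P P' F' : set X) :
  IP tau P -> P !=set0 -> P `<=` P' -> Srel_ne tau P' F' ->
  exists F, Srel_ne tau P F.
Proof.
move=> IPP Pn PP' [_ [_ [_ [[q F'q] [[_ [P'down _]] _]]]]].
have [p pc Pgen] := IP_future_chain ll_trans Hsep IPP Pn.
apply: (bounded_IP_partner IPP pc Pgen (q := q)) => n.
have Ppn : P (p n) by rewrite -Pgen; exact: future_chain_Ipast.
have [r r_below pnr] := P'down _ (PP' _ Ppn).
exact: ll_trans pnr (r_below _ F'q).
Qed.

End BoundedChains.

Section CompletionPoints.
Context {R : realType} {X : topologicalType} (tau : X * X -> \bar R).
Local Notation ll := (ll tau).
Local Notation cc := (cc tau).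
Implicit Types a : set X * set X.

Lemma cc_IP a : cc a -> a.1 !=set0 -> IP tau a.1.
Proof. by case=> [[]//|[[]//|[-> _] [x]]]. Qed.

Lemma cc_IF a : cc a -> a.2 !=set0 -> IF tau a.2.
Proof. by case=> [[_ [_ []]]//|[[_ [_ [-> _]]] [x]|[_ []]//]]. Qed.

Lemma cc_Srel_ne a : cc a -> a.1 !=set0 -> a.2 !=set0 -> Srel_ne tau a.1 a.2.
Proof. by case=> [//|[[_ [_ [-> _]]] _ [x]|[-> _] [x]]]. Qed.

Lemma cc_past_set a : cc a -> past_set tau a.1.
Proof.
move=> cca; have [->|/eqP/set0P Pn] := pselect (a.1 = set0).
  by apply/seteqP; split=> x // [].
by case: (cc_IP cca Pn).
Qed.

Lemma cc_future_set a : cc a -> future_set tau a.2.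
Proof.
move=> cca; have [->|/eqP/set0P Fn] := pselect (a.2 = set0).
  by apply/seteqP; split=> x // [].
by case: (cc_IF cca Fn).
Qed.

Lemma futureless_no_partner (P : set X) : cc (P, set0) -> ~ exists F, Srel_ne tau P F.
Proof. by case=> [[_ [_ [_ [[x]]]]]|[[_ [_ [_ nF]]]|[_ [_ [[x]]]]]]. Qed.

Lemma pastless_no_partner (F : set X) : cc (set0, F) -> ~ exists P, Srel_ne tau P F.
Proof. by case=> [[_ [[x]]]|[[_ [[x]]]|[_ [_ [_ nP]]]]]. Qed.

Lemma futureless_boundary (P : set X) :
  full tau -> cc (P, set0) -> cc_boundary tau (P, set0).
Proof.
move=> Hfull ccP; split=> // -[x _ [_ Fx]].
by have [[y]] := Hfull x; rewrite Fx.
Qed.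

Lemma pastless_boundary (F : set X) :
  full tau -> cc (set0, F) -> cc_boundary tau (set0, F).
Proof.
move=> Hfull ccF; split=> // -[x _ [Px _]].
by have [_ [y]] := Hfull x; rewrite Px.
Qed.

Lemma Srel_ne_Ipast_Ifut y :
  full tau -> S_property tau -> Srel_ne tau (Ipast tau y) (Ifut tau y).
Proof.
move=> Hfull HS; have [ccy _] := HS y; have [Fy Py] := Hfull y.
exact: (@cc_Srel_ne (Ipast tau y, Ifut tau y)).
Qed.

Hypothesis ll_trans : forall x y z, ll x y -> ll y z -> ll x z.

Lemma cc_ll a x y : cc a -> a.1 x -> a.2 y -> ll x y.
Proof.
move=> cca ax ay.
have [_ [_ [_ [_ [[_ [Pdown _]] _]]]]] :=
  cc_Srel_ne cca (ex_intro _ x ax) (ex_intro _ y ay).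
by have [z z_below xz] := Pdown _ ax; apply: ll_trans xz (z_below _ ay).
Qed.

End CompletionPoints.

Section TimeSeparation.
Context {R : realType} {X : topologicalType} (tau : X * X -> \bar R).
Local Notation ll := (ll tau).
Hypothesis Hlm : lorentzian_metric tau.
Local Open Scope ereal_scope.

Lemma lorentzian_ll_trans x y z : ll x y -> ll y z -> ll x z.
Proof.
move=> xy yz; case: Hlm => _ [_ tri].
exact: lt_le_trans (adde_gt0 xy yz) (tri x y z xy yz).
Qed.

Lemma tau_chains_nondecreasing (q p : nat -> X) n :
  past_chain tau q -> future_chain tau p -> ll (q n) (p n) ->
  tau (q n, p n) <= tau (q n.+1, p n.+1).
Proof.
move=> qc pc qp; case: Hlm => tau_ge0 [_ tri].
have qp' := lorentzian_ll_trans (qc n) qp.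
apply: le_trans (tri _ _ _ qp' (pc n)); apply: lee_paddr; first exact: tau_ge0.
by apply: le_trans (tri _ _ _ (qc n) qp); apply: lee_paddl.
Qed.

(* Once [q N << p N], the sequence [tau (q n, p n)] is nondecreasing from [N] on. *)
Lemma limn_tau_chains_gt0 (q p : nat -> X) k m :
  past_chain tau q -> future_chain tau p -> ll (q k) (p m) ->
  0 < limn (fun n => tau (q n, p n)).
Proof.
move=> qc pc qkpm; pose N := maxn k m.
have qp n : ll (q (n + N)%N) (p (n + N)%N).
  apply: (future_chain_ll lorentzian_ll_trans pc (leq_addl n N)).
  apply: (past_chain_ll lorentzian_ll_trans qc (leq_addl n N)).
  apply: (past_chain_ll lorentzian_ll_trans qc (leq_maxl k m)).
  exact: (future_chain_ll lorentzian_ll_trans pc (leq_maxr k m) qkpm).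
pose u n := tau (q (n + N)%N, p (n + N)%N).
have u_nd : nondecreasing_seq u.
  by apply/nondecreasing_seqP => n; apply: tau_chains_nondecreasing (qp n).
have u_cvg : (fun n => tau (q n, p n)) @ \oo --> ereal_sup (range u).
  by rewrite -(cvg_shiftn N); exact: ereal_nondecreasing_cvgn.
rewrite (cvg_lim _ u_cvg) //.
apply: lt_le_trans (ereal_sup_ubound _); last by exists 0%N.
exact: (qp 0%N).
Qed.

Lemma llbar_meet (a b : set X * set X) : llbar tau a b -> a.2 `&` b.1 !=set0.
Proof.
rewrite /llbar /taubar; case: pselect => [_|_]; first by rewrite ltxx.
case: pselect => [e|_]; last by rewrite ltxx.
case: (cid e) => -[q p] [qc [qF [pc pP]]] /=.
have [[n qpn] _|no_ll] := pselect (exists n, ll (q n) (p n)).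
  exists (p n); split; last by rewrite -pP; exact: future_chain_Ipast.
  by rewrite -qF; exists (q n) => //; exists n.
have -> : (fun n => tau (q n, p n)) = fun=> 0.
  apply/funext => n; apply/eqP; rewrite eq_le; case: Hlm => -> _.
  by rewrite andbT leNgt; apply/negP => qpn; apply: no_ll; exists n.
by rewrite lim_cst ?ltxx.
Qed.

Hypothesis Hsep : separable tau.

Lemma meet_llbar (a b : set X * set X) :
  IF tau a.2 -> IP tau b.1 -> a.2 `&` b.1 !=set0 -> llbar tau a b.
Proof.
move=> IFa IPb [r [ar br]]; rewrite /llbar /taubar.
case: pselect => [[a0|b0]|_]; [by rewrite a0 in ar|by rewrite b0 in br|].
case: pselect => [e|no_chains]; last first.
  have [q qc qF] := IF_past_chain lorentzian_ll_trans Hsep IFa (ex_intro _ r ar).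
  have [p pc pP] := IP_future_chain lorentzian_ll_trans Hsep IPb (ex_intro _ r br).
  by case: no_chains; exists (q, p).
case: (cid e) => -[q p] [qc [qF [pc pP]]] /=.
move: ar br; rewrite -qF -pP => -[_ [k _ <-] qkr] [_ [m _ <-] rpm].
exact: (limn_tau_chains_gt0 qc pc (lorentzian_ll_trans qkr rpm)).
Qed.

End TimeSeparation.

Lemma LI_sub_LS {X : topologicalType} (A : nat -> set X) : LI A `<=` LS A.
Proof. by move=> x [N AN] M; exists (maxn N M); [exact: leq_maxr|apply/AN/leq_maxl]. Qed.

Section ChronologicalTopology.
Context {R : realType} {X : topologicalType} (tau : X * X -> \bar R).
Local Notation cc := (cc tau).

(* [None] drops the corresponding constraint. *)
Definition chr_diamond (op oq : option X) : set (set X * set X) :=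
  [set d | cc d /\ (forall p, op = Some p -> d.1 p) /\ (forall q, oq = Some q -> d.2 q)].

Lemma chr_diamond_open op oq : chr_open tau (chr_diamond op oq).
Proof.
have eventually_in (A : nat -> set X) (B : set X) o :
    (B !=set0 -> B `<=` LI A) -> (forall p, o = Some p -> B p) ->
    exists N, forall n, (N <= n)%N -> forall p, o = Some p -> A n p.
  case: o => [p|] BLI Bo; last by exists 0%N.
  have [N Ap] := BLI (ex_intro _ p (Bo p erefl)) p (Bo p erefl).
  by exists N => n Nn _ [<-]; exact: Ap.
split=> [d []//|]; split=> [d []//|s Ds d [ccd [dLI1 dLI2]]].
split=> // -[_ [dp dq]].
have [N1 sp] := eventually_in _ _ _ (fun h => (dLI1 h).1) dp.
have [N2 sq] := eventually_in _ _ _ (fun h => (dLI2 h).1) dq.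
have [ccs []] := Ds (maxn N1 N2); rewrite /chr_diamond /=.
by split=> //; split=> ?; [apply/sp/leq_maxl|apply/sq/leq_maxr].
Qed.

Hypothesis Hlm : lorentzian_metric tau.
Let ll_trans := lorentzian_ll_trans Hlm.

Lemma chr_diamond_convex op oq a b c : cc a -> cc b -> cc c ->
  llbar tau a b -> llbar tau b c ->
  chr_diamond op oq a -> chr_diamond op oq c -> chr_diamond op oq b.
Proof.
move=> cca ccb ccc /(llbar_meet Hlm) [r [ar br]] /(llbar_meet Hlm) [r' [br' cr']].
move=> [_ [ap _]] [_ [_ cq]]; split=> //; split=> [p /ap pa|q /cq qc].
- exact: past_set_ll (cc_past_set ccb) br (cc_ll ll_trans cca pa ar).
- exact: future_set_ll (cc_future_set ccb) br' (cc_ll ll_trans ccc cr' qc).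
Qed.

End ChronologicalTopology.

Section CCompletion.
Context {R : realType} {X : topologicalType} (tau : X * X -> \bar R).
Context (le : X -> X -> Prop).
Local Notation cc := (cc tau).
Hypothesis Hlm : lorentzian_metric tau.
Hypothesis Hsep : separable tau.
Hypothesis Hfull : full tau.
Hypothesis HS : S_property tau.
Hypothesis Hcomp : compatible_causal tau le.
Hypothesis Hgh : globally_hyperbolic le.
Hypothesis Hbd : forall a b, cc_boundary tau a -> cc_boundary tau b ->
  le_taubar tau a b -> a = b.

Let ll_trans := lorentzian_ll_trans Hlm.
Let Ifut_open := lorentzian_Ifut_open Hlm.
Let Ipast_open := lorentzian_Ipast_open Hlm.
Let Srel_ne_pt y := Srel_ne_Ipast_Ifut y Hfull HS.

Let ll_le x y : ll tau x y -> le x y.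
Proof. by case: Hcomp => _ [_ [+ _]]; apply. Qed.

Let diamond_compact x y : compact (causal_diamond le x y).
Proof. by case: Hgh. Qed.

Lemma IF_partner_sub (F P' F' : set X) :
  IF tau F -> F !=set0 -> F `<=` F' -> Srel_ne tau P' F' ->
  exists P, Srel_ne tau P F.
Proof.
move=> IFF Fn FF' /(Srel_ne_dual tau _ _).2 P'F'.
have diamond_compact' x y : compact (causal_diamond (fun x y => le y x) x y).
  suff -> : causal_diamond (fun x y => le y x) x y = causal_diamond le y x by [].
  by apply/seteqP; split=> z [].
have Srel_ne_pt' y : Srel_ne (dual_tau tau) (Ifut tau y) (Ipast tau y).
  exact/(Srel_ne_dual tau _ _).2.
have [P /(Srel_ne_dual tau _ _).1 PF] := IP_partner_sub (dual_ll_trans ll_trans)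
  (separable_dual Hsep) Ipast_open Ifut_open (fun x y => @ll_le y x)
  diamond_compact' Srel_ne_pt' IFF Fn FF' P'F'.
by exists P.
Qed.

Lemma futureless_IP_maximal (P P' : set X) :
  cc (P, set0) -> P !=set0 -> IP tau P' -> P `<=` P' -> P' = P.
Proof.
move=> ccP Pn IPP' PP'.
have nF' : ~ exists F', Srel_ne tau P' F'.
  move=> [F' P'F']; apply: (futureless_no_partner ccP).
  exact: (IP_partner_sub ll_trans Hsep Ifut_open Ipast_open ll_le
    diamond_compact Srel_ne_pt (cc_IP ccP Pn) Pn PP' P'F').
have ccP' : cc (P', set0).
  by right; left; split=> //; split; [case: Pn => x /PP'; exists x|split].
have le_PP' : le_taubar tau (P, set0) (P', set0).
  split=> [b [ccb /(llbar_meet Hlm) [r [br Pr]]]|c [_ /(llbar_meet Hlm) [r [[]]]]].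
  split=> //; apply: (meet_llbar Hlm Hsep) => //=.
    exact: cc_IF ccb (ex_intro _ r br).
  by exists r; split=> //; exact: PP'.
by case: (Hbd (futureless_boundary Hfull ccP) (futureless_boundary Hfull ccP') le_PP').
Qed.

Lemma pastless_IF_maximal (F F' : set X) :
  cc (set0, F) -> F !=set0 -> IF tau F' -> F `<=` F' -> F' = F.
Proof.
move=> ccF Fn IFF' FF'.
have nP' : ~ exists P', Srel_ne tau P' F'.
  move=> [P' P'F']; apply: (pastless_no_partner ccF).
  exact: IF_partner_sub (cc_IF ccF Fn) Fn FF' P'F'.
have ccF' : cc (set0, F').
  by right; right; split=> //; split=> //; split; [case: Fn => x /FF'; exists x|].
have le_F'F : le_taubar tau (set0, F') (set0, F).
  split=> [b [_ /(llbar_meet Hlm) [r [_ []]]]|c [ccc /(llbar_meet Hlm) [r [Fr cr]]]].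
  split=> //; apply: (meet_llbar Hlm Hsep) => //=.
    exact: cc_IP ccc (ex_intro _ r cr).
  by exists r; split=> //; exact: FF'.
by case: (Hbd (pastless_boundary Hfull ccF') (pastless_boundary Hfull ccF) le_F'F).
Qed.

Lemma Lchr_chr_diamonds a0 (op oq : nat -> option X) s : cc a0 ->
  a0.1 `<=` LI (fun n => [set x | exists2 p, op n = Some p & ll tau x p]) ->
  a0.2 `<=` LI (fun n => [set x | exists2 q, oq n = Some q & ll tau q x]) ->
  (forall n, chr_diamond tau (op n) (oq n) (s n)) -> Lchr tau s a0.
Proof.
move=> cca0 opLI oqLI Ds; have ccs n : cc (s n) by case: (Ds n).
have s_ll n x y : (s n).1 x -> (s n).2 y -> ll tau x y := cc_ll ll_trans (ccs n).
have LI1 : a0.1 `<=` LI (fun n => (s n).1).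
  move=> x /opLI [N xp]; exists N => n /xp [p opn xpn].
  have [_ [sp _]] := Ds n; exact: past_set_ll (cc_past_set (ccs n)) (sp p opn) xpn.
have LI2 : a0.2 `<=` LI (fun n => (s n).2).
  move=> x /oqLI [N qx]; exists N => n /qx [q oqn qxn].
  have [_ [_ sq]] := Ds n; exact: future_set_ll (cc_future_set (ccs n)) (sq q oqn) qxn.
split=> //; split=> [Pn|Fn].
  split=> //; split; [exact: cc_IP|split=> [x /LI1/LI_sub_LS //|P' IPP' a0P' P'LS]].
  have [Fn|F0] := pselect (a0.2 !=set0).
    have [_ [_ [_ [_ [[_ [_ maxP]] _]]]]] := cc_Srel_ne cca0 Pn Fn.
    exact: maxP IPP' a0P' (LS_sub_down s_ll IPP'.1 P'LS LI2).
  have a0F : a0.2 = set0 by apply/seteqP; split=> x // ax; apply: F0; exists x.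
  by apply: futureless_IP_maximal => //; rewrite -a0F -surjective_pairing.
split=> //; split; [exact: cc_IF|split=> [x /LI2/LI_sub_LS //|F' IFF' a0F' F'LS]].
have [Pn|P0] := pselect (a0.1 !=set0).
  have [_ [_ [_ [_ [_ [_ [_ maxF]]]]]]] := cc_Srel_ne cca0 Pn Fn.
  exact: maxF IFF' a0F' (LS_sub_up s_ll IFF'.1 F'LS LI1).
have a0P : a0.1 = set0 by apply/seteqP; split=> x // ax; apply: P0; exists x.
by apply: pastless_IF_maximal => //; rewrite -a0P -surjective_pairing.
Qed.

(* Otherwise some [s n] lies in the [n]-th diamond but outside [O]; such a
   sequence converges to [a0], contradicting the closedness of the complement. *)
Lemma chr_diamond_basis a0 O : cc a0 -> chr_open tau O -> O a0 ->
  exists op oq, chr_diamond tau op oq a0 /\ chr_diamond tau op oq `<=` O.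
Proof.
move=> cca0 [_ [_ Oclosed]] Oa0.
have [op [opP opLI]] := IP_approx_seq ll_trans Hsep (cc_IP cca0).
have [oq [oqF oqLI]] := IF_approx_seq ll_trans Hsep (cc_IF cca0).
apply: contrapT => noD.
have /choice [s Ds] : forall n, exists b, chr_diamond tau (op n) (oq n) b /\ ~ O b.
  move=> n; apply: contrapT => allO; apply: noD; exists (op n), (oq n).
  split; first by split=> //; split=> [p /opP|q /oqF].
  by move=> b Db; apply: contrapT => nOb; apply: allO; exists b.
have s_out n : (cc `\` O) (s n) by case: (Ds n) => -[].
have [_] := Oclosed s s_out a0 (Lchr_chr_diamonds cca0 opLI oqLI (fun n => (Ds n).1)).
exact.
Qed.

End CCompletion.

Theorem mainTheorem11 (R : realType) (X : topologicalType)
  (tau : X * X -> \bar R) (le : X -> X -> Prop) :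
  lorentzian_metric tau ->
  full tau -> separable tau -> chronologically_dense tau -> S_property tau ->
  compatible_causal tau le -> globally_hyperbolic le ->
  (forall a b, cc_boundary tau a -> cc_boundary tau b ->
     le_taubar tau a b -> a = b) ->
  forall (a0 : set X * set X) (U : set (set X * set X)),
    cc tau a0 -> chr_nbhd tau U a0 ->
    exists V, chr_nbhd tau V a0 /\
      forall a b c, cc tau a -> cc tau b -> cc tau c ->
        llbar tau a b -> llbar tau b c -> V a -> V c -> U b.
Proof.
move=> Hlm Hfull Hsep _ HS Hcomp Hgh Hbd a0 U0 cca0 [W [Wopen [Wa0 WU]]].
have [op [oq [Da0 DO]]] :=
  chr_diamond_basis Hlm Hsep Hfull HS Hcomp Hgh Hbd cca0 Wopen Wa0.
exists (chr_diamond tau op oq); split.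
  by exists (chr_diamond tau op oq); split; [exact: chr_diamond_open|split].
move=> a b c cca ccb ccc ab bc Da Dc; apply/WU/DO.
exact: (chr_diamond_convex Hlm cca ccb ccc ab bc Da Dc).
Qed.
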